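(* Let $E=\begin{bmatrix}\widetilde E&0\\0&0\end{bmatrix}$ be a $(0,1,-1)$ matrix such that $E\mathbf 1=0$ and $\mathbf 1^TE=0^T$. Then $E$ is realizable if and only if $\widetilde E$ is realizable.
   Context: Two $(0,1)$ matrices $A,B$ are Gram mates if $AA^T=BB^T$, $A^TA=B^TB$ and $A\neq B$. A $(0,1,-1)$ matrix $F$ with $F\mathbf 1=0$ and $\mathbf 1^TF=0^T$ is realizable if there is a $(0,1)$ matrix $A$ such that $A$ and $A+F$ are Gram mates. *)

From HB Require Import structures.
From mathcomp Require Import all_boot all_order all_algebra.
Set Implicit Arguments. Unset Strict Implicit. Unset Printing Implicit Defensive.
Import GRing.Theory Num.Theory.
Local Open Scope ring_scope.

Definition is01 (m n : nat) (A : 'M[int]_(m, n)) : Prop :=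
  forall i j, A i j = 0 \/ A i j = 1.

Definition is01m1 (m n : nat) (F : 'M[int]_(m, n)) : Prop :=
  forall i j, F i j = 0 \/ F i j = 1 \/ F i j = -1.

Definition zero_line_sums (m n : nat) (F : 'M[int]_(m, n)) : Prop :=
  F *m (const_mx 1 : 'cV[int]_n) = 0 /\ (const_mx 1 : 'rV[int]_m) *m F = 0.

Definition gram_mates (m n : nat) (A B : 'M[int]_(m, n)) : Prop :=
  [/\ is01 A, is01 B, A *m A^T = B *m B^T, A^T *m A = B^T *m B & A <> B].

Definition realizable (m n : nat) (F : 'M[int]_(m, n)) : Prop :=
  [/\ is01m1 F, zero_line_sums F & exists A : 'M[int]_(m, n), gram_mates A (A + F)].

From HB Require Import structures.
From mathcomp Require Import all_boot all_order all_algebra.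
Local Open Scope ring_scope.
Import GRing.Theory.

(* Both Gram matrices of a block matrix have upper-left block [a a^T + b b^T],
   resp. [a^T a + c^T c]; if only the block [a] changes, the common summands
   cancel.  Conversely, a direct sum with a common (0,1) block has block
   diagonal Gram matrices, so Gram mates stay Gram mates. *)

Section Blocks.

Variables m1 m2 n1 n2 : nat.

Lemma is01_block_ul (a : 'M[int]_(m1, n1)) b c d :
  is01 (block_mx a b c d : 'M_(m1 + m2, n1 + n2)) -> is01 a.
Proof. by move=> Hbl i j; have := Hbl (lshift m2 i) (lshift n2 j); rewrite block_mxEul. Qed.

Lemma is01m1_block_ul (a : 'M[int]_(m1, n1)) b c d :
  is01m1 (block_mx a b c d : 'M_(m1 + m2, n1 + n2)) -> is01m1 a.
Proof. by move=> Hbl i j; have := Hbl (lshift m2 i) (lshift n2 j); rewrite block_mxEul. Qed.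

Lemma is01_block_diag (a : 'M[int]_(m1, n1)) (d : 'M[int]_(m2, n2)) :
  is01 a -> is01 d -> is01 (block_mx a 0 0 d).
Proof.
move=> Ha Hd i j; rewrite -[i]splitK -[j]splitK.
by case: (split i) => i'; case: (split j) => j';
  rewrite ?block_mxEul ?block_mxEur ?block_mxEdl ?block_mxEdr ?mxE; auto.
Qed.

Lemma zero_line_sums_block_ul (e : 'M[int]_(m1, n1)) :
  zero_line_sums (block_mx e 0 0 0 : 'M_(m1 + m2, n1 + n2)) -> zero_line_sums e.
Proof.
case=> [Hrow Hcol]; split.
  move: Hrow; rewrite -col_mx_const mul_block_col !mul0mx !addr0 -col_mx0.
  by case/eq_col_mx.
move: Hcol; rewrite -row_mx_const mul_row_block !mulmx0 !addr0 -row_mx0.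
by case/eq_row_mx.
Qed.

Lemma gram_mates_block_ul (a a' : 'M[int]_(m1, n1)) b c (d : 'M_(m2, n2)) :
  a <> a' -> gram_mates (block_mx a b c d) (block_mx a' b c d) -> gram_mates a a'.
Proof.
move=> neq_aa' [Hbl Hbl' Hrows Hcols _]; split => //.
- exact: is01_block_ul Hbl.
- exact: is01_block_ul Hbl'.
- move: Hrows; rewrite !tr_block_mx !mulmx_block.
  by case/eq_block_mx => + _ _ _; apply: addIr.
- move: Hcols; rewrite !tr_block_mx !mulmx_block.
  by case/eq_block_mx => + _ _ _; apply: addIr.
Qed.

Lemma gram_mates_block_diag (a a' : 'M[int]_(m1, n1)) (d : 'M_(m2, n2)) :
  is01 d -> gram_mates a a' -> gram_mates (block_mx a 0 0 d) (block_mx a' 0 0 d).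
Proof.
move=> Hd [Ha Ha' Hrows Hcols neq_aa']; split.
- exact: is01_block_diag.
- exact: is01_block_diag.
- by rewrite !tr_block_mx !mulmx_block !trmx0 !mulmx0 !mul0mx !addr0 !add0r Hrows.
- by rewrite !tr_block_mx !mulmx_block !trmx0 !mulmx0 !mul0mx !addr0 !add0r Hcols.
- by case/eq_block_mx.
Qed.

End Blocks.

Theorem proposition4p3 (m1 m2 n1 n2 : nat) (Et : 'M[int]_(m1, n1)) :
  is01m1 (block_mx Et 0 0 0 : 'M[int]_(m1 + m2, n1 + n2)) ->
  zero_line_sums (block_mx Et 0 0 0 : 'M[int]_(m1 + m2, n1 + n2)) ->
  (realizable (block_mx Et 0 0 0 : 'M[int]_(m1 + m2, n1 + n2)) <-> realizable Et).
Proof.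
move=> H01 Hsums; split; case=> _ _ [A Hmates].
  split; [exact: is01m1_block_ul H01 | exact: zero_line_sums_block_ul Hsums |].
  exists (ulsubmx A).
  rewrite -[A]submxK add_block_mx !addr0 in Hmates.
  apply: gram_mates_block_ul (Hmates) => same_ul.
  by case: Hmates => _ _ _ _; rewrite -same_ul.
split => //; exists (block_mx A 0 0 0).
rewrite add_block_mx !addr0; apply: gram_mates_block_diag Hmates.
by move=> i j; left; rewrite mxE.
Qed.
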